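(* Let $d$ be a positive integer, $b\geqslant 5$ an integer, $a>0$ a real number with $\zeta=\log_b a\notin\mathbb{Q}$. Let $\mathbf{w}=(\mathbf{w}_n)_{n\geqslant1}$ where $\mathbf{w}_n$ is the most significant digit of $a^{n^d}$ in base $b$. Define $f:\mathbb{T}^d\to\mathbb{T}^d$ by $f(x)_i=\{\zeta+\sum_{j=1}^{i}\binom{i}{j}x_j\}$ for $i=1,\dots,d$, and for $t\in\{1,\dots,b-1\}$ let $U_t=\{x\in\mathbb{T}^d:\log_b t\leqslant x_d<\log_b(t+1)\}$. For a finite word $\mathbf{u}=u_1\cdots u_n$ over $\{1,\dots,b-1\}$ set $U_{\mathbf{u}}=U_{u_1}\cap f^{-1}(U_{u_2})\cap\cdots\cap f^{-(n-1)}(U_{u_n})$. Then $\mathbf{u}$ is a factor of $\mathbf{w}$ if and only if $U_{\mathbf{u}}$ has non-empty interior in $\mathbb{T}^d$.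
   Context: $\mathbb{T}^d=\mathbb{R}^d/\mathbb{Z}^d$ identified with $[0,1)^d$, $\{y\}$ is the fractional part. The most significant digit of a nonzero real $x$ in base $b$ is the unique $j\in\{1,\dots,b-1\}$ with $b^m j\leqslant|x|<b^m(j+1)$ for some integer $m$. A finite word $\mathbf{u}$ of length $n$ is a factor of $\mathbf{w}$ if $\mathbf{u}=\mathbf{w}_k\mathbf{w}_{k+1}\cdots\mathbf{w}_{k+n-1}$ for some $k\geqslant1$. (With $v_k=(\{\zeta k\},\dots,\{\zeta k^d\})$ one has $v_{k+1}=f(v_k)$ and $\mathbf{w}_k=t$ iff $v_k\in U_t$.) *)

From Stdlib Require Import Reals Lra Lia List.
Open Scope R_scope.

Definition frac (y : R) : R := frac_part y.

Definition logb (b : nat) (x : R) : R := ln x / ln (INR b).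

Definition is_msd (b : nat) (x : R) (j : nat) : Prop :=
  (1 <= j <= b - 1)%nat /\
  exists m : Z, powerRZ (INR b) m * INR j <= Rabs x < powerRZ (INR b) m * INR (j + 1).

Definition word_w (b d : nat) (a : R) (n : nat) (t : nat) : Prop :=
  is_msd b (a ^ (n ^ d)) t.

Definition is_factor (b d : nat) (a : R) (u : list nat) : Prop :=
  exists k : nat, (1 <= k)%nat /\
    forall i : nat, (i < length u)%nat -> word_w b d a (k + i) (nth i u 0%nat).

(* Points of T^d are functions nat -> R, only coordinates 1..d matter;
   x is in T^d = [0,1)^d iff 0 <= x_i < 1 for 1 <= i <= d. *)
Definition in_torus (d : nat) (x : nat -> R) : Prop :=
  forall i : nat, (1 <= i <= d)%nat -> 0 <= x i < 1.

Definition in_range (d i : nat) : bool := Nat.leb 1 i && Nat.leb i d.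

Definition fmap (d : nat) (zeta : R) (x : nat -> R) : nat -> R :=
  fun i => if in_range d i
           then frac (zeta + sum_f 1 i (fun j => Binomial.C i j * x j))
           else 0.

Definition U_t (b d : nat) (t : nat) (x : nat -> R) : Prop :=
  in_torus d x /\ logb b (INR t) <= x d < logb b (INR (t + 1)).

Definition U_word (b d : nat) (zeta : R) (u : list nat) (x : nat -> R) : Prop :=
  in_torus d x /\
  forall i : nat, (i < length u)%nat ->
    U_t b d (nth i u 0%nat) (Nat.iter i (fmap d zeta) x).

Definition proj_torus (d : nat) (y : nat -> R) : nat -> R :=
  fun i => if in_range d i then frac (y i) else 0.

(* A subset S of T^d has non-empty interior (quotient topology of R^d/Z^d):
   some open ball of R^d projects into S. *)
Definition nonempty_interior (d : nat) (S : (nat -> R) -> Prop) : Prop :=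
  exists (c : nat -> R) (eps : R), 0 < eps /\
    forall y : nat -> R,
      (forall i, (1 <= i <= d)%nat -> Rabs (y i - c i) < eps) ->
      S (proj_torus d y).

From Stdlib Require Import Reals List.
From Stdlib Require Import Lra Lia ZArith Classical FunctionalExtensionality IndefiniteDescription.
From Coquelicot Require Import Rcomplements.
Open Scope R_scope.

(** Write [ze = log_b a].  The leading digit of [a ^ (n ^ d)] is [t] iff
    [{ze n^d}] lies in [[log_b t, log_b (t+1))], and [f] lifts to the affine map
    [F y = (ze + sum_j C(i,j) y_j)_i] of [R^d], which sends [(ze k^i)_i] to
    [(ze (k+1)^i)_i].  So [u] occurs at position [k] iff the projection of
    [(ze k^i)_i] lies in [U_u].

    If [u] occurs at [k], a small ball placed just above [(ze k^i)_i] still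
    projects into [U_u], since [F^j] expands distances by at most [2^(dj)] and the
    digit windows are closed on the left.  Conversely, if a ball projects into
    [U_u], it suffices that the points [(ze n, ..., ze n^d)] are dense modulo 1.
    This follows from Weyl's theorem that polynomial sequences with an irrational
    coefficient have [o(N)] exponential sums (van der Corput differencing down to
    the linear case), applied to the kernel [prod_i cos (pi y_i) ^ (2M)]: if the
    orbit avoided an [eps]-box, the orbit averages of the kernel centred there,
    which converge to its mean, would be at most [cos (pi eps) ^ (2M)], while
    averaging [q^d] grid translates shows the mean is at least
    [q^-d cos (pi/q) ^ (2dM)]; for fine [q] and large [M] these are incompatible. *)

Fixpoint sumN (N : nat) (f : nat -> R) : R :=
  match N with O => 0 | S N' => sumN N' f + f N' end.

Lemma sumN_ext N f g : (forall n, (n < N)%nat -> f n = g n) -> sumN N f = sumN N g.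
Proof.
  induction N; simpl; intros H; auto.
  rewrite IHN by (intros; apply H; lia). rewrite H by lia. reflexivity.
Qed.

Lemma sumN_plus N f g : sumN N (fun n => f n + g n) = sumN N f + sumN N g.
Proof. induction N; simpl; [lra | rewrite IHN; lra]. Qed.

Lemma sumN_minus N f g : sumN N (fun n => f n - g n) = sumN N f - sumN N g.
Proof. induction N; simpl; [lra | rewrite IHN; lra]. Qed.

Lemma sumN_scal N c f : sumN N (fun n => c * f n) = c * sumN N f.
Proof. induction N; simpl; [lra | rewrite IHN; lra]. Qed.

Lemma sumN_const N c : sumN N (fun _ => c) = INR N * c.
Proof. induction N; simpl sumN; [simpl; lra | rewrite IHN, S_INR; lra]. Qed.

Lemma sumN_le N f g : (forall n, (n < N)%nat -> f n <= g n) -> sumN N f <= sumN N g.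
Proof.
  induction N; simpl; intros H; [lra |].
  assert (f N <= g N) by (apply H; lia).
  assert (sumN N f <= sumN N g) by (apply IHN; intros; apply H; lia).
  lra.
Qed.

Lemma sumN_nonneg N f : (forall n, (n < N)%nat -> 0 <= f n) -> 0 <= sumN N f.
Proof. intros H. rewrite <- (Rmult_0_r (INR N)), <- sumN_const. now apply sumN_le. Qed.

Lemma sumN_abs N f : Rabs (sumN N f) <= sumN N (fun n => Rabs (f n)).
Proof.
  induction N; simpl; [rewrite Rabs_R0; lra |].
  eapply Rle_trans; [apply Rabs_triang | lra].
Qed.

Lemma sumN_abs_bound N g K : (forall n, (n < N)%nat -> Rabs (g n) <= K) ->
  Rabs (sumN N g) <= INR N * K.
Proof.
  intros Hg. eapply Rle_trans; [apply sumN_abs |].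
  rewrite <- sumN_const. now apply sumN_le.
Qed.

Lemma sumN_swap N M (g : nat -> nat -> R) :
  sumN N (fun n => sumN M (fun m => g n m)) = sumN M (fun m => sumN N (fun n => g n m)).
Proof.
  induction N; simpl.
  - induction M; simpl; lra.
  - rewrite IHN, <- sumN_plus. reflexivity.
Qed.

Lemma sumN_sq N f : (sumN N f) ^ 2 = sumN N (fun r => sumN N (fun s => f r * f s)).
Proof.
  transitivity (sumN N (fun r => f r * sumN N f)).
  - rewrite (sumN_ext N (fun r => f r * sumN N f) (fun r => sumN N f * f r)) by (intros; ring).
    rewrite sumN_scal. ring.
  - apply sumN_ext; intros. now rewrite <- sumN_scal.
Qed.

Lemma sumN_indicator N r x : (r < N)%nat ->
  sumN N (fun s => if Nat.eqb r s then x else 0) = x.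
Proof.
  induction N as [|N IH]; intros Hr; [lia |]. simpl.
  destruct (Nat.eqb_spec r N) as [-> | Hne].
  - rewrite (sumN_ext N _ (fun _ => 0)), sumN_const; [ring |].
    intros n Hn. destruct (Nat.eqb_spec N n); [lia | auto].
  - rewrite IH; [ring | lia].
Qed.

Lemma sumN_telescope N g : sumN N (fun n => g (S n) - g n) = g N - g O.
Proof. induction N; simpl; [lra | rewrite IHN; lra]. Qed.

Lemma sumN_cauchy_schwarz N f : (sumN N f) ^ 2 <= INR N * sumN N (fun n => f n ^ 2).
Proof.
  induction N; [simpl; lra |]. cbn [sumN]. rewrite S_INR.
  assert (HS2 : 0 <= sumN N (fun n => f n ^ 2)) by (apply sumN_nonneg; intros; apply pow2_ge_0).
  set (S1 := sumN N f) in *. set (S2 := sumN N (fun n => f n ^ 2)) in *. clearbody S1 S2.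
  assert (HN : 0 <= INR N) by apply pos_INR.
  destruct (Req_dec (INR N) 0) as [E | E].
  - rewrite E in *. assert (S1 = 0) as -> by nra. nra.
  - assert (2 * S1 * f N <= INR N * f N ^ 2 + S2).
    { apply Rmult_le_reg_r with (INR N); [lra |].
      pose proof (pow2_ge_0 (INR N * f N - S1)). nra. }
    nra.
Qed.

Lemma sumN_shift N r f : (forall n, Rabs (f n) <= 1) ->
  Rabs (sumN N (fun n => f (n + r)%nat) - sumN N f) <= 2 * INR r.
Proof.
  intros Hf. induction r.
  - rewrite (sumN_ext N _ f) by (intros; f_equal; lia).
    rewrite Rminus_diag, Rabs_R0. simpl; lra.
  - rewrite S_INR.
    assert (E : sumN N (fun n => f (n + S r)%nat)
                = sumN N (fun n => f (n + r)%nat) + f (N + r)%nat - f r).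
    { clear IHr. induction N; simpl; [replace (0 + r)%nat with r by lia; lra |].
      rewrite IHN. replace (N + S r)%nat with (S (N + r)) by lia. lra. }
    rewrite E. pose proof (Hf (N + r)%nat) as H1. pose proof (Hf r) as H2.
    apply Rabs_le_between in H1, H2, IHr. apply Rabs_le_between. lra.
Qed.

Definition sumL {X} (G : list X) (f : X -> R) : R := fold_right (fun g acc => f g + acc) 0 G.

Lemma sumL_nonneg {X} (G : list X) f : (forall g, In g G -> 0 <= f g) -> 0 <= sumL G f.
Proof.
  induction G as [|g G IH]; simpl; intros Hf; [lra |].
  pose proof (Hf g (or_introl eq_refl)).
  assert (0 <= sumL G f) by (apply IH; intros; apply Hf; simpl; auto). lra.
Qed.

Lemma sumL_ge_term {X} (G : list X) f g0 : In g0 G -> (forall g, In g G -> 0 <= f g) ->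
  f g0 <= sumL G f.
Proof.
  induction G as [|g G IH]; simpl; intros Hin Hf; [contradiction |].
  pose proof (Hf g (or_introl eq_refl)).
  destruct Hin as [<- | Hin].
  - assert (0 <= sumL G f) by (apply sumL_nonneg; auto). lra.
  - assert (f g0 <= sumL G f) by auto. lra.
Qed.

Lemma sumL_le {X} (G : list X) f K : (forall g, In g G -> f g <= K) ->
  sumL G f <= INR (length G) * K.
Proof.
  induction G as [|g G IH]; simpl length; simpl sumL; intros H; [simpl; lra |].
  rewrite S_INR. pose proof (H g (or_introl eq_refl)).
  assert (sumL G f <= INR (length G) * K) by (apply IH; intros; apply H; simpl; auto). lra.
Qed.

Lemma sumN_sumL {X} (G : list X) N (f : X -> nat -> R) :
  sumN N (fun n => sumL G (fun g => f g n)) = sumL G (fun g => sumN N (f g)).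
Proof.
  induction G; simpl; [rewrite sumN_const; ring |].
  now rewrite sumN_plus, IHG.
Qed.

Lemma eventually_forall_in {X} (G : list X) (Q : X -> nat -> Prop) :
  (forall g, In g G -> exists N0, forall N, (N0 <= N)%nat -> Q g N) ->
  exists N0, forall g, In g G -> forall N, (N0 <= N)%nat -> Q g N.
Proof.
  induction G as [|g G IH]; intros H; [exists O; intros ? [] |].
  destruct IH as [N1 H1]; [intros; apply H; simpl; auto |].
  destruct (H g (or_introl eq_refl)) as [N2 H2].
  exists (max N1 N2). intros g' [<- | Hg] N HN; [apply H2 | apply H1]; auto; lia.
Qed.

Lemma eventually_le_mul_INR (K eps : R) : 0 < eps ->
  exists N0 : nat, forall N, (N0 <= N)%nat -> K <= eps * INR N.
Proof.
  intros He. destruct (INR_archimed eps K He) as [n Hn].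
  exists n. intros N HN. apply le_INR in HN. nra.
Qed.

(** * Polynomial sequences and Weyl sums *)

(** [poly_seq D al P]: [P] is a real polynomial in [n] of degree at most [D] whose
    coefficient of [n ^ D] is [al], expressed through finite differences: the
    difference [P (n + h) - P n] has degree [D - 1] and top coefficient [D h al]. *)
Fixpoint poly_seq (D : nat) (al : R) (P : nat -> R) : Prop :=
  match D with
  | O => forall n, P n = al
  | S D' => forall h, (1 <= h)%nat ->
      poly_seq D' (INR (S D') * INR h * al) (fun n => P (n + h)%nat - P n)
  end.

Lemma poly_seq_ext D : forall al al' P Q,
  poly_seq D al P -> al = al' -> (forall n, P n = Q n) -> poly_seq D al' Q.
Proof.
  induction D; simpl; intros al al' P Q H <- HPQ.
  - intros n; rewrite <- HPQ; auto.
  - intros h Hh. apply (IHD _ _ _ _ (H h Hh)); auto. intros; now rewrite !HPQ.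
Qed.

Lemma poly_seq_shift D : forall al P s, poly_seq D al P -> poly_seq D al (fun n => P (n + s)%nat).
Proof.
  induction D; simpl; intros al P s H; auto.
  intros h Hh. apply (poly_seq_ext D _ _ _ _ (IHD _ _ s (H h Hh))); auto.
  intros n; simpl. now replace (n + s + h)%nat with (n + h + s)%nat by lia.
Qed.

Lemma poly_seq_plus D : forall a b P Q,
  poly_seq D a P -> poly_seq D b Q -> poly_seq D (a + b) (fun n => P n + Q n).
Proof.
  induction D; simpl; intros a b P Q HP HQ.
  - intros; now rewrite HP, HQ.
  - intros h Hh. apply (poly_seq_ext D _ _ _ _ (IHD _ _ _ _ (HP h Hh) (HQ h Hh))); intros; ring.
Qed.

Lemma poly_seq_scal D : forall a c P, poly_seq D a P -> poly_seq D (c * a) (fun n => c * P n).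
Proof.
  induction D; simpl; intros a c P HP.
  - intros; now rewrite HP.
  - intros h Hh. apply (poly_seq_ext D _ _ _ _ (IHD _ c _ (HP h Hh))); intros; ring.
Qed.

Lemma poly_seq_raise D : forall a P, poly_seq D a P -> poly_seq (S D) 0 P.
Proof.
  induction D; intros a P HP.
  - intros h Hh n. simpl in *. rewrite !HP. ring.
  - intros h Hh. apply (poly_seq_ext (S D) _ _ _ _ (IHD _ _ (HP h Hh))); [ring | auto].
Qed.

Lemma poly_seq_raise_lt D D' a P : (D < D')%nat -> poly_seq D a P -> poly_seq D' 0 P.
Proof.
  revert a P. induction D'; intros a P Hlt HP; [lia |].
  destruct (Nat.eq_dec D D') as [<- | Hne]; [eapply poly_seq_raise; eauto |].
  apply (poly_seq_raise D' 0). apply (IHD' a); auto. lia.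
Qed.

Lemma poly_seq_const D c : poly_seq (S D) 0 (fun _ => c).
Proof. apply (poly_seq_raise_lt 0 _ c); [lia | simpl; auto]. Qed.

Lemma poly_seq_mul_id D : forall a P, poly_seq D a P -> poly_seq (S D) a (fun n => INR n * P n).
Proof.
  induction D; intros a P HP.
  - simpl in *. intros h Hh n. rewrite !HP, plus_INR. ring.
  - intros h Hh.
    assert (H1 := IHD _ _ (HP h Hh)).
    assert (H2 := poly_seq_scal (S D) a (INR h) _ (poly_seq_shift (S D) a P h HP)).
    apply (poly_seq_ext (S D) _ _ _ _ (poly_seq_plus _ _ _ _ _ H1 H2)).
    + rewrite !S_INR. ring.
    + intros n. rewrite plus_INR. ring.
Qed.

Lemma poly_seq_pow i : poly_seq i 1 (fun n => INR n ^ i).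
Proof.
  induction i; [simpl; auto |].
  apply (poly_seq_ext (S i) _ _ _ _ (poly_seq_mul_id i _ _ IHi)); auto.
Qed.

Definition irrational (al : R) : Prop := ~ exists p q : Z, q <> 0%Z /\ al = IZR p / IZR q.

Lemma irrational_mulZ al k : irrational al -> k <> 0%Z -> irrational (IZR k * al).
Proof.
  intros H Hk [p [q [Hq E]]]. apply H. exists p, (q * k)%Z. split; [lia |].
  rewrite mult_IZR. apply not_0_IZR in Hq, Hk.
  apply (Rmult_eq_reg_l (IZR k)); auto. rewrite E. field. auto.
Qed.

Lemma irrational_mulN al k : irrational al -> (k <> 0)%nat -> irrational (INR k * al).
Proof. intros. rewrite INR_IZR_INZ. apply irrational_mulZ; auto. lia. Qed.

Lemma irrational_sin al : irrational al -> sin (PI * al) <> 0.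
Proof.
  intros H E. apply sin_eq_0_0 in E as [k Hk]. apply H.
  exists k, 1%Z. split; [lia |]. pose proof PI_RGT_0.
  apply (Rmult_eq_reg_l PI); [| lra]. rewrite Hk. simpl. field.
Qed.

(** [sum_(n<N) exp (2 pi i P n) = o(N)], split into real and imaginary parts. *)
Definition exp_sums_o (P : nat -> R) : Prop :=
  forall eps, 0 < eps -> exists N0, forall N, (N0 <= N)%nat ->
    Rabs (sumN N (fun n => cos (2 * PI * P n))) <= eps * INR N /\
    Rabs (sumN N (fun n => sin (2 * PI * P n))) <= eps * INR N.

Lemma Rabs_cos_le_1 x : Rabs (cos x) <= 1.
Proof. apply Rabs_le. pose proof (COS_bound x). lra. Qed.

Lemma Rabs_sin_le_1 x : Rabs (sin x) <= 1.
Proof. apply Rabs_le. pose proof (SIN_bound x). lra. Qed.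

(** Multiply by [2 sin (pi al)]: the sums telescope. *)
Lemma linear_exp_sums_bounded al be N : sin (PI * al) <> 0 ->
  Rabs (sumN N (fun n => cos (2 * PI * (be + INR n * al)))) <= 1 / Rabs (sin (PI * al)) /\
  Rabs (sumN N (fun n => sin (2 * PI * (be + INR n * al)))) <= 1 / Rabs (sin (PI * al)).
Proof.
  intros Hs. set (s := sin (PI * al)).
  assert (Ha : 0 < Rabs s) by now apply Rabs_pos_lt.
  set (th := fun n => 2 * PI * (be + INR n * al) - PI * al).
  assert (Eth : forall n, th (S n) = 2 * PI * (be + INR n * al) + PI * al)
    by (intros; unfold th; rewrite S_INR; ring).
  assert (E1 : 2 * s * sumN N (fun n => cos (2 * PI * (be + INR n * al)))
               = sin (th N) - sin (th O)).
  { rewrite <- (sumN_telescope N (fun n => sin (th n))), <- sumN_scal.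
    apply sumN_ext; intros n _. rewrite Eth. unfold th. rewrite sin_plus, sin_minus. unfold s. ring. }
  assert (E2 : 2 * s * sumN N (fun n => sin (2 * PI * (be + INR n * al)))
               = - cos (th N) - - cos (th O)).
  { rewrite <- (sumN_telescope N (fun n => - cos (th n))), <- sumN_scal.
    apply sumN_ext; intros n _. rewrite Eth. unfold th. rewrite cos_plus, cos_minus. unfold s. ring. }
  assert (Hbound : forall x y z, 2 * s * x = y - z -> Rabs y <= 1 -> Rabs z <= 1 -> Rabs x <= 1 / Rabs s).
  { intros x y z Exyz Hy Hz. apply (Rmult_le_reg_l (2 * Rabs s)); [lra |].
    replace (2 * Rabs s * (1 / Rabs s)) with 2 by (field; lra).
    replace (2 * Rabs s) with (Rabs (2 * s)) by (rewrite Rabs_mult, Rabs_right; lra).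
    rewrite <- Rabs_mult, Exyz. eapply Rle_trans; [apply Rabs_triang |].
    rewrite Rabs_Ropp. lra. }
  split.
  - apply (Hbound _ _ _ E1); apply Rabs_sin_le_1.
  - apply (Hbound _ _ _ E2); rewrite Rabs_Ropp; apply Rabs_cos_le_1.
Qed.

Lemma exp_sums_o_linear al P : irrational al -> poly_seq 1 al P -> exp_sums_o P.
Proof.
  intros Hi HP.
  assert (E : forall n, P n = P O + INR n * al).
  { intros [|n]; [simpl; ring |]. specialize (HP (S n) ltac:(lia) O).
    cbv beta in HP. replace (O + S n)%nat with (S n) in HP by lia.
    replace (INR 1) with 1 in HP by reflexivity. lra. }
  intros eps He. pose proof (irrational_sin _ Hi) as Hs.
  destruct (eventually_le_mul_INR (1 / Rabs (sin (PI * al))) eps He) as [N0 HN0].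
  exists N0. intros N HN. specialize (HN0 N HN).
  destruct (linear_exp_sums_bounded al (P O) N Hs) as [H1 H2].
  rewrite (sumN_ext N (fun n => cos _) (fun n => cos (2 * PI * (P O + INR n * al))))
    by (intros; now rewrite E).
  rewrite (sumN_ext N (fun n => sin _) (fun n => sin (2 * PI * (P O + INR n * al))))
    by (intros; now rewrite E).
  lra.
Qed.

Lemma sumN_window_shift P H N (f : R -> R) : (forall x, Rabs (f x) <= 1) ->
  Rabs (sumN N (fun n => sumN H (fun r => f (2 * PI * P (n + r)%nat)))
        - INR H * sumN N (fun n => f (2 * PI * P n))) <= 2 * INR H ^ 2.
Proof.
  intros Hf. rewrite sumN_swap, <- sumN_const, <- sumN_minus.
  replace (2 * INR H ^ 2) with (INR H * (2 * INR H)) by ring.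
  apply sumN_abs_bound. intros r Hr.
  eapply Rle_trans; [apply (sumN_shift N r (fun n => f (2 * PI * P n))); auto |].
  apply lt_INR in Hr. lra.
Qed.

Lemma window_norm_sq P H n :
  (sumN H (fun r => cos (2 * PI * P (n + r)%nat))) ^ 2
  + (sumN H (fun r => sin (2 * PI * P (n + r)%nat))) ^ 2
  = sumN H (fun r => sumN H (fun s => cos (2 * PI * (P (n + r)%nat - P (n + s)%nat)))).
Proof.
  rewrite !sumN_sq, <- sumN_plus. apply sumN_ext; intros r _.
  rewrite <- sumN_plus. apply sumN_ext; intros s _.
  rewrite Rmult_minus_distr_l, cos_minus. ring.
Qed.

Lemma sq_le_of_dist x y e : Rabs (x - y) <= e -> x ^ 2 <= 2 * y ^ 2 + 2 * e ^ 2.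
Proof.
  intros Hxy. apply Rabs_le_between in Hxy.
  assert ((x - y) ^ 2 <= e ^ 2) by nra. pose proof (pow2_ge_0 (y - (x - y))). nra.
Qed.

(** Van der Corput's inequality: average [P] over windows of length [H], then apply
    Cauchy-Schwarz; only the correlations of [P] with its shifts remain. *)
Lemma van_der_corput P H N B : 0 <= B ->
  (forall r s, (r < H)%nat -> (s < r)%nat ->
     Rabs (sumN N (fun n => cos (2 * PI * (P (n + r)%nat - P (n + s)%nat)))) <= B) ->
  INR H ^ 2 * ((sumN N (fun n => cos (2 * PI * P n))) ^ 2
               + (sumN N (fun n => sin (2 * PI * P n))) ^ 2)
  <= 2 * INR N * (INR H * (INR N + INR H * B)) + 16 * INR H ^ 4.
Proof.
  intros HB Hrs.
  set (C := fun n => sumN H (fun r => cos (2 * PI * P (n + r)%nat))).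
  set (S := fun n => sumN H (fun r => sin (2 * PI * P (n + r)%nat))).
  assert (HC := sumN_window_shift P H N cos Rabs_cos_le_1).
  assert (HS := sumN_window_shift P H N sin Rabs_sin_le_1).
  rewrite Rabs_minus_sym in HC, HS. apply sq_le_of_dist in HC, HS.
  assert (CSC := sumN_cauchy_schwarz N C). assert (CSS := sumN_cauchy_schwarz N S).
  assert (Hcorr : sumN N (fun n => C n ^ 2) + sumN N (fun n => S n ^ 2)
                  = sumN H (fun r => sumN H (fun s =>
                      sumN N (fun n => cos (2 * PI * (P (n + r)%nat - P (n + s)%nat)))))).
  { unfold C, S. rewrite <- sumN_plus, (sumN_ext N _ _ (fun n _ => window_norm_sq P H n)).
    rewrite sumN_swap. apply sumN_ext; intros. apply sumN_swap. }
  assert (Hdiag : sumN H (fun r => sumN H (fun s =>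
                    sumN N (fun n => cos (2 * PI * (P (n + r)%nat - P (n + s)%nat)))))
                  <= INR H * (INR N + INR H * B)).
  { rewrite <- sumN_const. apply sumN_le. intros r Hr.
    rewrite <- (sumN_indicator H r (INR N)), <- sumN_const, <- sumN_plus by auto.
    apply sumN_le. intros s Hs. destruct (Nat.eqb_spec r s) as [<- | Hne].
    - rewrite (sumN_ext N _ (fun _ => 1)), sumN_const; [lra |].
      intros; now rewrite Rminus_diag, Rmult_0_r, cos_0.
    - assert (Hb : Rabs (sumN N (fun n => cos (2 * PI * (P (n + r)%nat - P (n + s)%nat)))) <= B).
      { destruct (Nat.lt_ge_cases s r); [auto |].
        rewrite (sumN_ext N _ (fun n => cos (2 * PI * (P (n + s)%nat - P (n + r)%nat)))).
        - apply Hrs; lia.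
        - intros; rewrite <- cos_neg. f_equal. ring. }
      apply Rabs_le_between in Hb. lra. }
  assert (HN : 0 <= INR N) by apply pos_INR.
  assert (INR N * (sumN N (fun n => C n ^ 2) + sumN N (fun n => S n ^ 2))
          <= INR N * (INR H * (INR N + INR H * B)))
    by (apply Rmult_le_compat_l; lra).
  unfold C, S in *. lra.
Qed.

Lemma exp_sums_o_of_differences P :
  (forall r s, (s < r)%nat -> exp_sums_o (fun n => P (n + r)%nat - P (n + s)%nat)) ->
  exp_sums_o P.
Proof.
  intros Hrs dl Hdl.
  set (ep := dl ^ 2 / 6). assert (Hep : 0 < ep) by (unfold ep; nra).
  destruct (eventually_le_mul_INR 6 (dl ^ 2) ltac:(nra)) as [H0 HH0].
  set (H := S H0). assert (HH : 6 <= dl ^ 2 * INR H) by (apply HH0; unfold H; lia).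
  set (pairs := list_prod (seq 0 H) (seq 0 H)).
  destruct (eventually_forall_in pairs (fun rs N => (snd rs < fst rs)%nat ->
     Rabs (sumN N (fun n => cos (2 * PI * (P (n + fst rs)%nat - P (n + snd rs)%nat))))
     <= ep * INR N)) as [N1 HN1].
  { intros [r s] _. destruct (Nat.lt_ge_cases s r) as [Hsr | Hrs'].
    - destruct (Hrs r s Hsr ep Hep) as [N2 HN2]. exists N2. intros N HN _. apply HN2; auto.
    - exists O. intros N _ Hsr. simpl in Hsr. lia. }
  destruct (eventually_le_mul_INR (16 * INR H ^ 2) (dl ^ 2 / 3) ltac:(nra)) as [N2 HN2].
  exists (max 1 (max N1 N2)). intros N HN.
  assert (HNpos : 1 <= INR N) by (apply (le_INR 1); lia).
  assert (HHpos : 1 <= INR H) by (apply (le_INR 1); unfold H; lia).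
  assert (Hv := van_der_corput P H N (ep * INR N) ltac:(nra)).
  specialize (HN2 N ltac:(lia)).
  set (Sc := sumN N (fun n => cos (2 * PI * P n))) in *.
  set (Ss := sumN N (fun n => sin (2 * PI * P n))) in *.
  assert (Hsq : Sc ^ 2 + Ss ^ 2 <= (dl * INR N) ^ 2).
  { apply (Rmult_le_reg_l (INR H ^ 2)); [nra |]. eapply Rle_trans.
    - apply Hv. intros r s Hr Hsr. apply (HN1 (r, s)); [| lia | auto].
      apply in_prod; apply in_seq; lia.
    - set (h := INR H) in *. set (nn := INR N) in *. unfold ep.
      assert (2 * nn * h * nn <= h ^ 2 * dl ^ 2 * nn ^ 2 / 3).
      { assert (0 <= nn * nn * h) by nra. nra. }
      assert (16 * h ^ 4 <= h ^ 2 * dl ^ 2 * nn ^ 2 / 3).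
      { assert (16 * h ^ 2 <= dl ^ 2 / 3 * nn * nn) by nra. nra. }
      nra. }
  assert (Hsq_abs : forall x, x ^ 2 <= (dl * INR N) ^ 2 -> Rabs x <= dl * INR N).
  { intros x Hx. assert (0 <= dl * INR N) by nra.
    unfold Rabs; destruct (Rcase_abs x); nra. }
  split; apply Hsq_abs; nra.
Qed.

Theorem exp_sums_o_poly D : forall al P, irrational al -> poly_seq (S D) al P -> exp_sums_o P.
Proof.
  induction D; intros al P Hi HP; [now apply (exp_sums_o_linear al) |].
  apply exp_sums_o_of_differences. intros r s Hsr.
  assert (HQ := HP (r - s)%nat ltac:(lia)). apply (poly_seq_shift _ _ _ s) in HQ.
  eapply (IHD _ _ _ (poly_seq_ext _ _ _ _ _ HQ eq_refl _)). Unshelve.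
  - rewrite Rmult_assoc. apply irrational_mulN; [apply irrational_mulN; auto |]; lia.
  - intros n; cbv beta. f_equal; f_equal; lia.
Qed.

(** * Trigonometric polynomials along polynomial orbits *)

Definition freq_dot (d : nat) (k : nat -> Z) (y : nat -> R) : R :=
  sumN d (fun i => IZR (k (S i)) * y (S i)).

(** A trigonometric polynomial in the coordinates [1..d] is a list of pairs
    [(a, k)] standing for [a cos (2 pi <k, y>)]. *)
Definition trig_poly : Type := list (R * (nat -> Z)).

Definition teval (d : nat) (T : trig_poly) (y : nat -> R) : R :=
  fold_right (fun t acc => fst t * cos (2 * PI * freq_dot d (snd t) y) + acc) 0 T.

Fixpoint freq_zero (d : nat) (k : nat -> Z) : bool :=
  match d with O => true | S d' => Z.eqb (k (S d')) 0 && freq_zero d' k end.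

Definition tmean (d : nat) (T : trig_poly) : R :=
  fold_right (fun t acc => (if freq_zero d (snd t) then fst t else 0) + acc) 0 T.

Definition shifted_orbit (ze : R) (c : nat -> R) (n : nat) : nat -> R :=
  fun i => ze * INR n ^ i - c i.

Lemma freq_dot_zero d k y : freq_zero d k = true -> freq_dot d k y = 0.
Proof.
  induction d; intros H; [reflexivity |]. simpl in H.
  apply andb_prop in H as [H1 H2]. apply Z.eqb_eq in H1.
  unfold freq_dot; simpl. fold (freq_dot d k y). rewrite IHd, H1 by auto. simpl; ring.
Qed.

Lemma freq_zero_false d k : freq_zero d k = false ->
  exists j, (1 <= j <= d)%nat /\ k j <> 0%Z /\ forall i, (j < i <= d)%nat -> k i = 0%Z.
Proof.
  induction d; intros H; [discriminate |]. simpl in H.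
  destruct (Z.eqb_spec (k (S d)) 0) as [Hk | Hk].
  - destruct (IHd H) as [j [Hj [Hkj Hi]]]. exists j. repeat split; auto; try lia.
    intros i Hi'. destruct (Nat.eq_dec i (S d)) as [-> | Hne]; auto. apply Hi; lia.
  - exists (S d). repeat split; auto; lia.
Qed.

Lemma poly_seq_monomial ze c i : poly_seq (S i) ze (fun n => ze * INR (S n) ^ S i - c (S i)).
Proof.
  assert (H1 := poly_seq_scal _ _ ze _ (poly_seq_shift _ _ _ 1 (poly_seq_pow (S i)))).
  assert (H2 := poly_seq_const i (- c (S i))).
  apply (poly_seq_ext _ _ _ _ _ (poly_seq_plus _ _ _ _ _ H1 H2)); [ring |].
  intros n. cbv beta. replace (n + 1)%nat with (S n) by lia. ring.
Qed.

(** Restricted to the first [m < j] coordinates the degree stays below [j];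
    coordinate [j] contributes the top coefficient [k j * ze]. *)
Lemma poly_seq_freq_dot d k ze c j : (1 <= j <= d)%nat ->
  (forall i, (j < i <= d)%nat -> k i = 0%Z) ->
  forall m, (m <= d)%nat ->
  poly_seq j (if Nat.leb j m then IZR (k j) * ze else 0)
    (fun n => freq_dot m k (shifted_orbit ze c (S n))).
Proof.
  intros Hj Hk m. destruct j as [|j]; [lia |]. induction m; intros Hm.
  - apply (poly_seq_ext _ _ _ _ _ (poly_seq_const j 0)); auto.
  - assert (Hterm : poly_seq (S j) (if Nat.eqb (S m) (S j) then IZR (k (S j)) * ze else 0)
                      (fun n => IZR (k (S m)) * (ze * INR (S n) ^ S m - c (S m)))).
    { destruct (Nat.eqb_spec (S m) (S j)) as [E | Hne].
      - rewrite <- E. apply (poly_seq_scal _ _ _ _ (poly_seq_monomial ze c m)).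
      - destruct (Nat.lt_ge_cases (S m) (S j)).
        + apply (poly_seq_ext _ _ _ _ _ (poly_seq_scal _ _ (IZR (k (S m))) _
                   (poly_seq_raise_lt _ _ _ _ H (poly_seq_monomial ze c m)))); auto. ring.
        + rewrite Hk by lia. apply (poly_seq_ext _ _ _ _ _ (poly_seq_const j 0)); auto.
          intros; simpl; ring. }
    apply (poly_seq_ext _ _ _ _ _ (poly_seq_plus _ _ _ _ _ (IHm ltac:(lia)) Hterm)).
    + destruct (Nat.leb_spec (S j) m), (Nat.eqb_spec (S m) (S j)), (Nat.leb_spec (S j) (S m));
        try lia; ring.
    + intros n. reflexivity.
Qed.

Lemma exp_sums_o_freq_dot d k ze c : irrational ze -> freq_zero d k = false ->
  exp_sums_o (fun n => freq_dot d k (shifted_orbit ze c (S n))).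
Proof.
  intros Hi Hz. destruct (freq_zero_false d k Hz) as [j [Hj [Hkj Hk]]].
  assert (HP := poly_seq_freq_dot d k ze c j Hj Hk d (le_n d)).
  replace (Nat.leb j d) with true in HP by (symmetry; apply Nat.leb_le; lia).
  destruct j as [|j]; [lia |].
  exact (exp_sums_o_poly j _ _ (irrational_mulZ _ _ Hi Hkj) HP).
Qed.

Lemma cos_term_average d a k ze c : irrational ze -> forall eps, 0 < eps ->
  exists N0, forall N, (N0 <= N)%nat ->
  Rabs (sumN N (fun n => a * cos (2 * PI * freq_dot d k (shifted_orbit ze c (S n))))
        - INR N * (if freq_zero d k then a else 0)) <= eps * INR N.
Proof.
  intros Hi eps He. destruct (freq_zero d k) eqn:Hz.
  - exists O. intros N _.
    rewrite (sumN_ext N _ (fun _ => a)), sumN_const, Rminus_diag, Rabs_R0.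
    + pose proof (pos_INR N). nra.
    + intros n _. now rewrite freq_dot_zero, Rmult_0_r, cos_0, Rmult_1_r.
  - pose proof (Rabs_pos a) as Ha.
    destruct (exp_sums_o_freq_dot d k ze c Hi Hz (eps / (Rabs a + 1))) as [N0 HN0].
    { apply Rdiv_lt_0_compat; lra. }
    exists N0. intros N HN. destruct (HN0 N HN) as [Hcos _].
    rewrite Rmult_0_r, Rminus_0_r, sumN_scal, Rabs_mult.
    pose proof (pos_INR N).
    apply Rle_trans with (Rabs a * (eps / (Rabs a + 1) * INR N)).
    + now apply Rmult_le_compat_l.
    + apply Rmult_le_reg_r with (Rabs a + 1); [lra |].
      replace (Rabs a * (eps / (Rabs a + 1) * INR N) * (Rabs a + 1))
        with (Rabs a * (eps * INR N)) by (field; lra).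
      assert (0 <= eps * INR N) by nra. nra.
Qed.

Lemma teval_average d ze c T : irrational ze -> forall eps, 0 < eps ->
  exists N0, forall N, (N0 <= N)%nat ->
  Rabs (sumN N (fun n => teval d T (shifted_orbit ze c (S n))) - INR N * tmean d T)
  <= eps * INR N.
Proof.
  intros Hi. induction T as [|[a k] T IH]; intros eps He.
  - exists O. intros N _. simpl. rewrite sumN_const, Rmult_0_r, Rminus_diag, Rabs_R0.
    pose proof (pos_INR N). nra.
  - destruct (IH (eps / 2) ltac:(lra)) as [N1 H1].
    destruct (cos_term_average d a k ze c Hi (eps / 2) ltac:(lra)) as [N2 H2].
    exists (max N1 N2). intros N HN.
    specialize (H1 N ltac:(lia)). specialize (H2 N ltac:(lia)).
    unfold teval, tmean in *; cbn [fold_right fst snd]. rewrite sumN_plus.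
    match goal with |- Rabs (?X + ?Y - INR N * (?m1 + ?m2)) <= _ =>
      replace (X + Y - INR N * (m1 + m2)) with ((X - INR N * m1) + (Y - INR N * m2)) by ring end.
    eapply Rle_trans; [apply Rabs_triang | lra].
Qed.

(** Product-to-sum: [2 cos x cos y = cos (x + y) + cos (x - y)]. *)
Definition tmul (T1 T2 : trig_poly) : trig_poly :=
  flat_map (fun t1 => flat_map (fun t2 =>
     (fst t1 * fst t2 / 2, fun i => (snd t1 i + snd t2 i)%Z)
     :: (fst t1 * fst t2 / 2, fun i => (snd t1 i - snd t2 i)%Z) :: nil) T2) T1.

Lemma teval_app d T1 T2 y : teval d (T1 ++ T2) y = teval d T1 y + teval d T2 y.
Proof. induction T1; simpl; [ring |]. unfold teval in *. simpl. rewrite IHT1. ring. Qed.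

Lemma freq_dot_add d k k' y :
  freq_dot d (fun i => (k i + k' i)%Z) y = freq_dot d k y + freq_dot d k' y.
Proof.
  unfold freq_dot. rewrite <- sumN_plus. apply sumN_ext; intros. rewrite plus_IZR. ring.
Qed.

Lemma freq_dot_sub d k k' y :
  freq_dot d (fun i => (k i - k' i)%Z) y = freq_dot d k y - freq_dot d k' y.
Proof.
  unfold freq_dot. rewrite <- sumN_minus. apply sumN_ext; intros. rewrite minus_IZR. ring.
Qed.

Lemma teval_mul d T1 T2 y : teval d (tmul T1 T2) y = teval d T1 y * teval d T2 y.
Proof.
  unfold tmul. induction T1 as [|[a k] T1 IH]; [unfold teval; simpl; ring |].
  cbn [flat_map fst snd]. rewrite teval_app, IH.
  change (teval d ((a, k) :: T1) y) with (a * cos (2 * PI * freq_dot d k y) + teval d T1 y).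
  enough (E : teval d (flat_map (fun t2 =>
      (a * fst t2 / 2, fun i => (k i + snd t2 i)%Z)
      :: (a * fst t2 / 2, fun i => (k i - snd t2 i)%Z) :: nil) T2) y
      = a * cos (2 * PI * freq_dot d k y) * teval d T2 y) by (rewrite E; ring).
  clear IH. induction T2 as [|[b k'] T2 IH2]; [unfold teval; simpl; ring |].
  cbn [flat_map]. rewrite teval_app, IH2.
  change (teval d ((b, k') :: T2) y) with (b * cos (2 * PI * freq_dot d k' y) + teval d T2 y).
  unfold teval at 1; cbn [fold_right fst snd]. rewrite freq_dot_add, freq_dot_sub.
  rewrite !Rmult_plus_distr_l, Rmult_minus_distr_l, cos_plus, cos_minus. field.
Qed.

Definition trig_rep (d : nat) (f : (nat -> R) -> R) : Prop :=
  exists T : trig_poly, forall y, teval d T y = f y.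

Lemma trig_rep_mul d f g : trig_rep d f -> trig_rep d g -> trig_rep d (fun y => f y * g y).
Proof.
  intros [T1 H1] [T2 H2]. exists (tmul T1 T2). intros; now rewrite teval_mul, H1, H2.
Qed.

Lemma trig_rep_const d c : trig_rep d (fun _ => c).
Proof.
  exists ((c, fun _ => 0%Z) :: nil). intros y. unfold teval; simpl.
  rewrite freq_dot_zero, Rmult_0_r, cos_0; [ring |].
  induction d; simpl; auto.
Qed.

Lemma trig_rep_pow d f M : trig_rep d f -> trig_rep d (fun y => f y ^ M).
Proof.
  intros Hf. induction M; [apply (trig_rep_const d 1) |]. simpl. now apply trig_rep_mul.
Qed.

Lemma trig_rep_cos_sq d i : (1 <= i <= d)%nat -> trig_rep d (fun y => cos (PI * y i) ^ 2).
Proof.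
  intros Hi. set (e := fun j => if Nat.eqb j i then 1%Z else 0%Z).
  assert (He : forall y, freq_dot d e y = y i).
  { intros y. unfold freq_dot, e. destruct i as [|i]; [lia |].
    rewrite (sumN_ext d _ (fun m => if Nat.eqb i m then y (S i) else 0)).
    - apply sumN_indicator. lia.
    - intros m _. destruct (Nat.eqb_spec (S m) (S i)), (Nat.eqb_spec i m); subst; simpl; try ring; lia. }
  exists ((1 / 2, fun _ => 0%Z) :: (1 / 2, e) :: nil). intros y. unfold teval; simpl.
  rewrite He, freq_dot_zero by (clear; induction d; simpl; auto).
  replace (2 * PI * y i) with (2 * (PI * y i)) by ring.
  rewrite cos_2a_cos, Rmult_0_r, cos_0. field.
Qed.

Fixpoint prodN (n : nat) (f : nat -> R) : R :=
  match n with O => 1 | S n' => prodN n' f * f n' end.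

Definition kernel (d M : nat) (y : nat -> R) : R :=
  prodN d (fun m => (cos (PI * y (S m)) ^ 2) ^ M).

Lemma trig_rep_kernel d M : trig_rep d (kernel d M).
Proof.
  unfold kernel.
  enough (H : forall m, (m <= d)%nat ->
            trig_rep d (fun y => prodN m (fun j => (cos (PI * y (S j)) ^ 2) ^ M)))
    by exact (H d (le_n d)).
  induction m; intros Hm; [apply (trig_rep_const d 1) |].
  apply (trig_rep_mul d _ _ (IHm ltac:(lia))).
  apply trig_rep_pow, trig_rep_cos_sq. lia.
Qed.

(** * Density of polynomial orbits modulo 1 *)

Lemma cos_sq_shift_int x (m : Z) : cos (PI * (x - IZR m)) ^ 2 = cos (PI * x) ^ 2.
Proof.
  rewrite Rmult_minus_distr_l, cos_minus, (sin_eq_0_1 (PI * IZR m)) by (exists m; ring).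
  pose proof (sin_eq_0_1 (PI * IZR m) ltac:(exists m; ring)) as Hs.
  pose proof (sin2_cos2 (PI * IZR m)) as Hc. rewrite Hs in Hc. unfold Rsqr in Hc.
  replace ((cos (PI * x) * cos (PI * IZR m) + sin (PI * x) * 0) ^ 2)
    with (cos (PI * x) ^ 2 * (cos (PI * IZR m) * cos (PI * IZR m))) by ring.
  replace (cos (PI * IZR m) * cos (PI * IZR m)) with 1 by lra. ring.
Qed.

Lemma cos_sq_abs t : cos (PI * Rabs t) ^ 2 = cos (PI * t) ^ 2.
Proof.
  unfold Rabs. destruct (Rcase_abs t); auto.
  rewrite <- cos_neg. do 3 f_equal. ring.
Qed.

Lemma nearest_int x : exists m : Z, Rabs (x - IZR m) <= 1 / 2.
Proof.
  exists (Int_part (x + 1 / 2)). pose proof (base_Int_part (x + 1 / 2)).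
  apply Rabs_le. lra.
Qed.

Lemma cos_sq_le_of_far_from_Z dl x : 0 < dl <= 1 / 2 ->
  (forall m : Z, dl <= Rabs (x - IZR m)) -> cos (PI * x) ^ 2 <= cos (PI * dl) ^ 2.
Proof.
  intros Hd Hfar. destruct (nearest_int x) as [m Hm]. specialize (Hfar m).
  rewrite <- (cos_sq_shift_int x m), <- cos_sq_abs.
  pose proof PI_RGT_0. pose proof (Rabs_pos (x - IZR m)).
  assert (0 <= cos (PI * Rabs (x - IZR m))) by (apply cos_ge_0; nra).
  assert (cos (PI * Rabs (x - IZR m)) <= cos (PI * dl)) by (apply cos_decr_1; nra).
  nra.
Qed.

Lemma cos_sq_ge_of_near_Z q x : 2 <= q ->
  (exists m : Z, Rabs (x - IZR m) <= 1 / q) -> cos (PI / q) ^ 2 <= cos (PI * x) ^ 2.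
Proof.
  intros Hq [m Hm]. rewrite <- (cos_sq_shift_int x m), <- cos_sq_abs.
  pose proof PI_RGT_0. pose proof (Rabs_pos (x - IZR m)).
  assert (1 / q <= 1 / 2) by (apply Rmult_le_reg_r with (2 * q); [lra | field_simplify; lra]).
  assert (Eq : PI / q = PI * (1 / q)) by (field; lra). rewrite Eq.
  assert (0 <= cos (PI * (1 / q))) by (apply cos_ge_0; nra).
  assert (cos (PI * (1 / q)) <= cos (PI * Rabs (x - IZR m))) by (apply cos_decr_1; nra).
  nra.
Qed.

Lemma cos_sq_unit_interval x : 0 <= cos x ^ 2 <= 1.
Proof. pose proof (COS_bound x). split; [apply pow2_ge_0 | nra]. Qed.

Lemma pow_unit_interval a M : 0 <= a <= 1 -> 0 <= a ^ M <= 1.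
Proof. intros H. split; [apply pow_le; lra |]. rewrite <- (pow1 M). apply pow_incr. lra. Qed.

Lemma prodN_unit_interval n f : (forall m, (m < n)%nat -> 0 <= f m <= 1) -> 0 <= prodN n f <= 1.
Proof.
  induction n; intros H; simpl; [lra |].
  assert (0 <= prodN n f <= 1) by (apply IHn; intros; apply H; lia).
  specialize (H n ltac:(lia)). nra.
Qed.

Lemma prodN_le_factor n f j B : (forall m, (m < n)%nat -> 0 <= f m <= 1) ->
  (j < n)%nat -> f j <= B -> prodN n f <= B.
Proof.
  induction n; intros H Hj HB; [lia |]. simpl.
  assert (0 <= prodN n f <= 1) by (apply prodN_unit_interval; intros; apply H; lia).
  pose proof (H n ltac:(lia)). destruct (Nat.eq_dec j n) as [<- | Hne]; [nra |].
  assert (prodN n f <= B) by (apply IHn; [intros; apply H; lia | lia | auto]). nra.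
Qed.

Lemma pow_le_prodN n f L : 0 <= L -> (forall m, (m < n)%nat -> L <= f m) -> L ^ n <= prodN n f.
Proof.
  induction n; intros HL H; simpl; [lra |].
  assert (L ^ n <= prodN n f) by (apply IHn; auto; intros; apply H; lia).
  pose proof (H n ltac:(lia)). pose proof (pow_le L n HL). nra.
Qed.

Lemma kernel_unit_interval d M y : 0 <= kernel d M y <= 1.
Proof.
  apply prodN_unit_interval. intros. apply pow_unit_interval, cos_sq_unit_interval.
Qed.

Fixpoint grid (Q e : nat) : list (nat -> R) :=
  match e with
  | O => (fun _ => 0) :: nil
  | S e' => flat_map (fun g => map (fun j => fun i => if Nat.eqb i (S e') then INR j / INR Q else g i)
                                   (seq 0 Q)) (grid Q e')
  end.

Lemma grid_length Q e : length (grid Q e) = (Q ^ e)%nat.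
Proof.
  induction e; simpl; auto. rewrite flat_map_concat_map, length_concat, map_map.
  rewrite (map_ext _ (fun _ => Q)) by (intros; now rewrite length_map, length_seq).
  rewrite <- IHe. generalize (grid Q e). induction l; simpl; lia.
Qed.

Lemma near_grid_point_1d (Q : nat) x : (1 <= Q)%nat ->
  exists j, (j < Q)%nat /\ exists m : Z, Rabs (x - INR j / INR Q - IZR m) <= 1 / INR Q.
Proof.
  intros HQ. assert (HQR : 1 <= INR Q) by (apply (le_INR 1); auto).
  set (m := Int_part x). pose proof (base_Int_part x) as [B1 B2]. fold m in B1, B2.
  set (t := x - IZR m).
  set (p := Int_part (t * INR Q)). pose proof (base_Int_part (t * INR Q)) as [C1 C2].
  fold p in C1, C2.
  assert (Hp0 : (-1 < p)%Z) by (apply lt_IZR; unfold t in *; simpl; nra).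
  assert (Hpq : (p < Z.of_nat Q)%Z) by (apply lt_IZR; rewrite <- INR_IZR_INZ; unfold t in *; nra).
  exists (Z.to_nat p). split; [lia |]. exists m.
  rewrite INR_IZR_INZ, Z2Nat.id by lia.
  assert (E : x - IZR p / INR Q - IZR m = (t * INR Q - IZR p) * / INR Q) by (unfold t; field; lra).
  assert (HQi : 0 < / INR Q) by (apply Rinv_0_lt_compat; lra).
  rewrite E. unfold Rdiv. rewrite Rmult_1_l. apply Rabs_le. split.
  - assert (0 <= (t * INR Q - IZR p) * / INR Q) by (apply Rmult_le_pos; lra). lra.
  - rewrite <- (Rmult_1_l (/ INR Q)) at 2. apply Rmult_le_compat_r; lra.
Qed.

Lemma near_grid_point (Q : nat) e y : (1 <= Q)%nat -> exists g, In g (grid Q e) /\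
  forall i, (1 <= i <= e)%nat -> exists m : Z, Rabs (y i - g i - IZR m) <= 1 / INR Q.
Proof.
  intros HQ. induction e.
  - exists (fun _ => 0). split; [simpl; auto | intros; lia].
  - destruct IHe as [g [Hg Hc]]. destruct (near_grid_point_1d Q (y (S e)) HQ) as [j [Hj Hm]].
    exists (fun i => if Nat.eqb i (S e) then INR j / INR Q else g i). split.
    + simpl. apply in_flat_map. exists g. split; auto.
      apply in_map_iff. exists j. split; auto. apply in_seq. lia.
    + intros i Hi. destruct (Nat.eqb_spec i (S e)) as [-> | Hne]; auto. apply Hc. lia.
Qed.

Lemma bernoulli_minus n x : 0 <= x <= 1 -> 1 - INR n * x <= (1 - x) ^ n.
Proof.
  intros Hx. induction n; [simpl; lra |].
  rewrite S_INR, <- tech_pow_Rmult. pose proof (pos_INR n). nra.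
Qed.

(** Holds because [cos (pi / q) ^ (2 d) -> 1] as [q -> oo]. *)
Lemma exists_grid_size d c1 : 0 <= c1 < 1 ->
  exists q : nat, (2 <= q)%nat /\ c1 < (cos (PI / INR q) ^ 2) ^ d.
Proof.
  intros Hc. destruct (INR_archimed (1 - c1) (INR d * PI ^ 2) ltac:(lra)) as [n Hn].
  exists (n + 4)%nat. split; [lia |]. set (q := INR (n + 4)).
  assert (Hq : 4 <= q) by (unfold q; rewrite plus_INR; simpl; pose proof (pos_INR n); lra).
  assert (Hnq : INR n <= q) by (unfold q; rewrite plus_INR; simpl; lra).
  pose proof PI_RGT_0 as Hpi. pose proof PI_4 as Hpi4. pose proof PI2_1 as Hpi2.
  set (a := PI / q).
  assert (Ha : 0 < a <= 1).
  { unfold a. split; [apply Rdiv_lt_0_compat; lra |].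
    apply Rmult_le_reg_r with q; [lra |]. unfold Rdiv. rewrite Rmult_assoc, Rinv_l; lra. }
  assert (Hcos : 1 - a ^ 2 / 2 <= cos a).
  { destruct (cos_bound a 0) as [Hb _]; try lra. unfold cos_approx, cos_term in Hb. simpl in Hb. lra. }
  assert (H1 : 1 - a ^ 2 <= cos a ^ 2).
  { assert ((1 - a ^ 2 / 2) ^ 2 <= cos a ^ 2) by (apply pow_incr; nra). nra. }
  assert (H2 : 1 - INR d * a ^ 2 <= (cos a ^ 2) ^ d).
  { eapply Rle_trans; [apply bernoulli_minus; nra |]. apply pow_incr. nra. }
  assert (H3 : INR d * a ^ 2 < 1 - c1).
  { unfold a. replace (INR d * (PI / q) ^ 2) with (INR d * PI ^ 2 / (q * q)) by (field; lra).
    apply Rmult_lt_reg_r with (q * q); [nra |].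
    unfold Rdiv. rewrite Rmult_assoc, Rinv_l by nra.
    assert (0 <= (q - INR n) * (1 - c1)) by (apply Rmult_le_pos; lra).
    assert (0 <= (1 - c1) * q * (q - 1)) by (apply Rmult_le_pos; [apply Rmult_le_pos |]; lra).
    nra. }
  lra.
Qed.

Lemma exists_pow_dominates c1 c2 K : 0 <= c1 < c2 -> 0 < K -> exists M : nat, K * c1 ^ M < c2 ^ M.
Proof.
  intros Hc HK.
  destruct (pow_lt_1_zero (c1 / c2)) with (y := / K) as [M HM].
  - rewrite Rabs_right by (apply Rle_ge, Rdiv_le_0_compat; lra).
    apply Rmult_lt_reg_r with c2; [lra |]. unfold Rdiv. rewrite Rmult_assoc, Rinv_l; lra.
  - now apply Rinv_0_lt_compat.
  - exists M. specialize (HM M (le_n M)).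
    rewrite Rabs_right in HM by (apply Rle_ge, pow_le, Rdiv_le_0_compat; lra).
    unfold Rdiv in HM. rewrite Rpow_mult_distr, pow_inv in HM.
    assert (Hc2 : 0 < c2 ^ M) by (apply pow_lt; lra).
    apply Rmult_lt_compat_l with (r := K * c2 ^ M) in HM; [| nra].
    replace (K * c2 ^ M * (c1 ^ M * / c2 ^ M)) with (K * c1 ^ M) in HM by (field; lra).
    replace (K * c2 ^ M * / K) with (c2 ^ M) in HM by (field; lra). exact HM.
Qed.

Section KernelMean.

Variables (d M : nat) (ze : R) (T : trig_poly).
Hypothesis ze_irr : irrational ze.
Hypothesis T_kernel : forall y, teval d T y = kernel d M y.

(** The kernel centred at [c] is at most [cos (pi dl) ^ (2 M)] all along the orbit. *)
Lemma kernel_mean_upper c dl : 0 < dl <= 1 / 2 ->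
  (forall n, (1 <= n)%nat -> exists i, (1 <= i <= d)%nat /\
     forall m : Z, dl <= Rabs (ze * INR n ^ i - IZR m - c i)) ->
  tmean d T <= (cos (PI * dl) ^ 2) ^ M.
Proof.
  intros Hdl Hfar. apply Rle_plus_epsilon. intros e He.
  destruct (teval_average d ze c T ze_irr e He) as [N0 HN0].
  set (N := max N0 1). specialize (HN0 N ltac:(unfold N; lia)).
  assert (HN1 : 1 <= INR N) by (apply (le_INR 1); unfold N; lia).
  assert (Hs : sumN N (fun n => teval d T (shifted_orbit ze c (S n))) <= INR N * (cos (PI * dl) ^ 2) ^ M).
  { rewrite <- sumN_const. apply sumN_le. intros n _. rewrite T_kernel. unfold kernel.
    destruct (Hfar (S n) ltac:(lia)) as [i [Hi Hm]].
    apply (prodN_le_factor d _ (i - 1)); [intros; apply pow_unit_interval, cos_sq_unit_interval | lia |].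
    replace (S (i - 1)) with i by lia. apply pow_incr. split; [apply pow2_ge_0 |].
    apply cos_sq_le_of_far_from_Z; auto. intros m. unfold shifted_orbit.
    replace (ze * INR (S n) ^ i - c i - IZR m) with (ze * INR (S n) ^ i - IZR m - c i) by ring.
    apply Hm. }
  apply Rabs_le_between in HN0. apply Rmult_le_reg_l with (INR N); lra.
Qed.

(** Averaging the kernel over the [q ^ d] translates by grid points: at every point
    some translate is [1/q]-close to an integer point. *)
Lemma kernel_mean_lower q : (2 <= q)%nat ->
  ((cos (PI / INR q) ^ 2) ^ M) ^ d <= INR q ^ d * tmean d T.
Proof.
  intros Hq. assert (HqR : 2 <= INR q) by (apply (le_INR 2); auto).
  set (G := grid q d). set (L := tmean d T). set (c2 := (cos (PI / INR q) ^ 2) ^ M).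
  assert (HG : INR (length G) = INR q ^ d) by (unfold G; now rewrite grid_length, pow_INR).
  assert (HGpos : 0 < INR q ^ d) by (apply pow_lt; lra).
  rewrite <- HG. apply Rle_plus_epsilon. intros e He.
  set (e' := e / INR (length G)). assert (He' : 0 < e') by (unfold e'; apply Rdiv_lt_0_compat; lra).
  destruct (eventually_forall_in G (fun g N =>
     Rabs (sumN N (fun n => teval d T (shifted_orbit ze g (S n))) - INR N * L) <= e' * INR N))
    as [N0 HN0]; [intros g _; now apply teval_average |].
  set (N := max N0 1). assert (HN1 : 1 <= INR N) by (apply (le_INR 1); unfold N; lia).
  assert (Hpt : forall n, c2 ^ d <= sumL G (fun g => teval d T (shifted_orbit ze g (S n)))).
  { intros n. destruct (near_grid_point q d (fun i => ze * INR (S n) ^ i) ltac:(lia)) as [g0 [Hg0 Hc0]].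
    eapply Rle_trans; [| apply (sumL_ge_term G _ g0 Hg0)].
    - cbv beta. rewrite T_kernel. apply pow_le_prodN; [apply pow_le, pow2_ge_0 |].
      intros m Hm. apply pow_incr. split; [apply pow2_ge_0 |].
      apply cos_sq_ge_of_near_Z; auto. apply (Hc0 (S m)). lia.
    - intros g _. rewrite T_kernel. apply kernel_unit_interval. }
  assert (Hlow : INR N * c2 ^ d <= sumL G (fun g => sumN N (fun n => teval d T (shifted_orbit ze g (S n))))).
  { rewrite <- sumN_sumL, <- sumN_const. apply sumN_le. intros; apply Hpt. }
  assert (Hup : sumL G (fun g => sumN N (fun n => teval d T (shifted_orbit ze g (S n))))
                <= INR (length G) * (INR N * (L + e'))).
  { apply sumL_le. intros g Hg. specialize (HN0 g Hg N ltac:(unfold N; lia)).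
    apply Rabs_le_between in HN0. nra. }
  assert (c2 ^ d <= INR (length G) * (L + e')) by (apply Rmult_le_reg_l with (INR N); nra).
  unfold e' in *. replace (INR (length G) * (L + e / INR (length G))) with (INR (length G) * L + e) in *
    by (field; lra). lra.
Qed.

End KernelMean.

Theorem orbit_dense_mod1 d ze : irrational ze -> forall (c : nat -> R) eps, 0 < eps ->
  exists n, (1 <= n)%nat /\ forall i, (1 <= i <= d)%nat ->
    exists m : Z, Rabs (ze * INR n ^ i - IZR m - c i) < eps.
Proof.
  intros Hi c eps He. apply NNPP; intro Hno.
  set (dl := Rmin eps (1 / 2)).
  assert (Hdl : 0 < dl <= 1 / 2) by (unfold dl; split; [apply Rmin_glb_lt; lra | apply Rmin_r]).
  assert (Hfar : forall n, (1 <= n)%nat -> exists i, (1 <= i <= d)%nat /\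
            forall m : Z, dl <= Rabs (ze * INR n ^ i - IZR m - c i)).
  { intros n Hn. apply NNPP; intro Hb. apply Hno. exists n. split; auto. intros i Hii.
    apply NNPP; intro Hm. apply Hb. exists i. split; auto.
    intros m. apply Rnot_lt_le. intro. apply Hm. exists m.
    pose proof (Rmin_l eps (1 / 2)). unfold dl in *. lra. }
  set (c1 := cos (PI * dl) ^ 2).
  assert (Hc1 : 0 <= c1 < 1).
  { pose proof PI_RGT_0. unfold c1.
    assert (0 <= cos (PI * dl)) by (apply cos_ge_0; nra).
    assert (cos (PI * dl) < 1) by (rewrite <- cos_0; apply cos_decreasing_1; nra). nra. }
  destruct (exists_grid_size d c1 Hc1) as [q [Hq Hc2]].
  assert (HqR : 0 < INR q ^ d) by (apply pow_lt, (lt_INR 0); lia).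
  destruct (exists_pow_dominates c1 ((cos (PI / INR q) ^ 2) ^ d) (INR q ^ d) ltac:(lra) HqR)
    as [M HM].
  destruct (trig_rep_kernel d M) as [T HT].
  assert (Hup := kernel_mean_upper d M ze T Hi HT c dl Hdl Hfar).
  assert (Hlow := kernel_mean_lower d M ze T Hi HT q Hq).
  fold c1 in Hup.
  replace (((cos (PI / INR q) ^ 2) ^ M) ^ d) with (((cos (PI / INR q) ^ 2) ^ d) ^ M) in Hlow
    by (rewrite <- !pow_mult; f_equal; lia).
  assert (INR q ^ d * tmean d T <= INR q ^ d * c1 ^ M) by (apply Rmult_le_compat_l; lra).
  lra.
Qed.

(** * Leading digits and fractional parts *)

Lemma frac_eq x (m : Z) : IZR m <= x < IZR m + 1 -> frac x = x - IZR m.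
Proof.
  intros H. unfold frac.
  destruct (Int_part_frac_part_spec x m (x - IZR m)) as [_ E]; auto; [lra | ring].
Qed.

Lemma frac_unit_interval x : 0 <= frac x < 1.
Proof. unfold frac. pose proof (base_fp x). lra. Qed.

Lemma frac_Int_part x : frac x = x - IZR (Int_part x).
Proof. apply frac_eq. pose proof (base_Int_part x). lra. Qed.

Lemma frac_add_int x (z : Z) : frac (x + IZR z) = frac x.
Proof.
  rewrite (frac_eq (x + IZR z) (Int_part x + z)), frac_Int_part, plus_IZR; [ring |].
  pose proof (base_Int_part x). rewrite plus_IZR. lra.
Qed.

Lemma frac_add_small x s : 0 <= s -> frac x + s < 1 -> frac (x + s) = frac x + s.
Proof.
  intros H1 H2. rewrite frac_Int_part in H2.
  rewrite (frac_eq (x + s) (Int_part x)), frac_Int_part; [ring |].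
  pose proof (base_Int_part x). lra.
Qed.

Lemma int_window_iff_frac lo hi z : 0 <= lo -> hi <= 1 ->
  (exists m : Z, IZR m + lo <= z < IZR m + hi) <-> lo <= frac z < hi.
Proof.
  intros Hlo Hhi. split.
  - intros [m Hm]. rewrite (frac_eq z m); lra.
  - intros Hz. exists (Int_part z). rewrite frac_Int_part in Hz. lra.
Qed.

Lemma ln_base_pos b : (2 <= b)%nat -> 0 < ln (INR b).
Proof. intros Hb. rewrite <- ln_1. apply ln_increasing; [lra |]. apply (lt_INR 1). lia. Qed.

Lemma logb_lt_iff b x y : (2 <= b)%nat -> 0 < x -> 0 < y -> x < y <-> logb b x < logb b y.
Proof.
  intros Hb Hx Hy. pose proof (ln_base_pos b Hb). unfold logb. split; intros H'.
  - apply Rmult_lt_compat_r; [now apply Rinv_0_lt_compat | now apply ln_increasing].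
  - apply ln_lt_inv; auto. apply Rmult_lt_reg_r with (/ ln (INR b)); auto.
    now apply Rinv_0_lt_compat.
Qed.

Lemma logb_le_iff b x y : (2 <= b)%nat -> 0 < x -> 0 < y -> x <= y <-> logb b x <= logb b y.
Proof.
  intros Hb Hx Hy. split; intros H'.
  - apply Rnot_lt_le. rewrite <- logb_lt_iff by auto. lra.
  - apply Rnot_lt_le. rewrite (logb_lt_iff b) by auto. lra.
Qed.

Lemma logb_powerRZ_mul b (m : Z) y : (2 <= b)%nat -> 0 < y ->
  logb b (powerRZ (INR b) m * y) = IZR m + logb b y.
Proof.
  intros Hb Hy. pose proof (ln_base_pos b Hb). assert (HbR : 0 < INR b) by (apply (lt_INR 0); lia).
  unfold logb. rewrite ln_mult, powerRZ_Rpower, ln_Rpower by (auto; apply powerRZ_lt; auto).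
  field. lra.
Qed.

Lemma logb_digit_window b t : (2 <= b)%nat -> (1 <= t <= b - 1)%nat ->
  0 <= logb b (INR t) /\ logb b (INR (t + 1)) <= 1.
Proof.
  intros Hb Ht. pose proof (ln_base_pos b Hb).
  assert (HbR : 0 < INR b) by (apply (lt_INR 0); lia).
  split.
  - replace 0 with (logb b 1) by (unfold logb; rewrite ln_1; field; lra).
    apply logb_le_iff; auto; [lra | apply (lt_INR 0); lia | apply (le_INR 1); lia].
  - replace 1 with (logb b (INR b)) by (unfold logb; field; lra).
    apply logb_le_iff; auto; [apply (lt_INR 0); lia | apply le_INR; lia].
Qed.

Lemma is_msd_iff_frac b x t : (2 <= b)%nat -> 0 < x -> (1 <= t <= b - 1)%nat ->
  is_msd b x t <-> logb b (INR t) <= frac (logb b x) < logb b (INR (t + 1)).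
Proof.
  intros Hb Hx Ht.
  assert (Ht0 : 0 < INR t) by (apply (lt_INR 0); lia).
  assert (Ht1 : 0 < INR (t + 1)) by (apply (lt_INR 0); lia).
  assert (HbR : 0 < INR b) by (apply (lt_INR 0); lia).
  destruct (logb_digit_window b t Hb Ht) as [Hlo Hhi].
  rewrite <- int_window_iff_frac by auto. unfold is_msd. rewrite Rabs_right by lra.
  split.
  - intros [_ [m [H1 H2]]]. exists m.
    rewrite <- !logb_powerRZ_mul by auto.
    split; [apply logb_le_iff | apply logb_lt_iff]; auto; apply Rmult_lt_0_compat; auto;
      apply powerRZ_lt; auto.
  - intros [m [H1 H2]]. split; auto. exists m.
    assert (0 < powerRZ (INR b) m) by (apply powerRZ_lt; auto).
    rewrite <- !logb_powerRZ_mul in H1, H2 by auto.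
    split; [apply (logb_le_iff b) | apply (logb_lt_iff b)]; auto; apply Rmult_lt_0_compat; auto.
Qed.

(** * The skew product and its lift to [R^d] *)

Lemma C_n0 n : C n 0 = 1.
Proof. unfold C. rewrite Nat.sub_0_r. simpl. field. apply INR_fact_neq_0. Qed.

Lemma C_nn n : C n n = 1.
Proof. unfold C. rewrite Nat.sub_diag. simpl. field. apply INR_fact_neq_0. Qed.

Lemma C_is_nat n : forall k, (k <= n)%nat -> exists m : nat, C n k = INR m.
Proof.
  induction n; intros k Hk.
  - replace k with 0%nat by lia. exists 1%nat. now rewrite C_n0.
  - destruct k as [|k]; [exists 1%nat; now rewrite C_n0 |].
    destruct (Nat.eq_dec k n) as [-> | Hne]; [exists 1%nat; now rewrite C_nn |].
    rewrite <- pascal by lia.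
    destruct (IHn k ltac:(lia)) as [m1 H1], (IHn (S k) ltac:(lia)) as [m2 H2].
    exists (m1 + m2)%nat. now rewrite plus_INR, H1, H2.
Qed.

Lemma C_nonneg n k : (k <= n)%nat -> 0 <= C n k.
Proof. intros H. destruct (C_is_nat n k H) as [m ->]. apply pos_INR. Qed.

Definition lift_map (ze : R) (y : nat -> R) : nat -> R :=
  fun i => ze + sum_f 1 i (fun j => C i j * y j).

Lemma sum_f_1 i g : (1 <= i)%nat -> sum_f 1 i g = sum_f_R0 (fun x => g (S x)) (i - 1).
Proof. intros. unfold sum_f. apply sum_eq. intros. f_equal. lia. Qed.

Lemma sum_f_R0_diff_int N u v : (forall x, (x <= N)%nat -> exists z : Z, u x - v x = IZR z) ->
  exists z : Z, sum_f_R0 u N - sum_f_R0 v N = IZR z.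
Proof.
  induction N; intros H; simpl; [apply H; lia |].
  destruct IHN as [z1 H1]; [intros; apply H; lia |].
  destruct (H (S N) (le_n _)) as [z2 H2].
  exists (z1 + z2)%Z. rewrite plus_IZR. lra.
Qed.

(** [f] commutes with the projection because the binomial coefficients are integers. *)
Lemma fmap_proj_torus d ze y : fmap d ze (proj_torus d y) = proj_torus d (lift_map ze y).
Proof.
  apply functional_extensionality. intros i. unfold fmap, proj_torus, lift_map.
  destruct (in_range d i) eqn:Hr; auto.
  unfold in_range in Hr. apply andb_prop in Hr as [H1 H2]. apply Nat.leb_le in H1, H2.
  rewrite !sum_f_1 by auto.
  set (fy := fun x => if in_range d x then frac (y x) else 0).
  destruct (sum_f_R0_diff_int (i - 1) (fun x => C i (S x) * y (S x))
              (fun x => C i (S x) * fy (S x))) as [z Hz].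
  { intros x Hx. assert (in_range d (S x) = true)
      by (unfold in_range; apply andb_true_intro; split; apply Nat.leb_le; lia).
    unfold fy. rewrite H. destruct (C_is_nat i (S x) ltac:(lia)) as [m ->].
    rewrite frac_Int_part. exists (Z.of_nat m * Int_part (y (S x)))%Z.
    rewrite mult_IZR, <- INR_IZR_INZ. ring. }
  replace (ze + sum_f_R0 (fun x => C i (S x) * y (S x)) (i - 1))
    with (ze + sum_f_R0 (fun x => C i (S x) * fy (S x)) (i - 1) + IZR z) by lra.
  now rewrite frac_add_int.
Qed.

Lemma iter_fmap_proj_torus d ze y j :
  Nat.iter j (fmap d ze) (proj_torus d y) = proj_torus d (Nat.iter j (lift_map ze) y).
Proof. induction j; simpl; auto. now rewrite IHj, fmap_proj_torus. Qed.

Lemma lift_map_monomials ze x y : (forall k, (1 <= k)%nat -> y k = ze * x ^ k) ->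
  forall i, (1 <= i)%nat -> lift_map ze y i = ze * (x + 1) ^ i.
Proof.
  intros Hy i Hi. unfold lift_map. rewrite binomial, decomp_sum, sum_f_1 by lia.
  replace (Init.Nat.pred i) with (i - 1)%nat by lia.
  rewrite C_n0, pow1, Rmult_plus_distr_l, scal_sum.
  rewrite (sum_eq _ (fun k => C i (S k) * x ^ S k * 1 ^ (i - S k) * ze)); [simpl; ring |].
  intros. rewrite Hy, pow1 by lia. ring.
Qed.

Lemma iter_lift_map_orbit ze n j : forall i, (1 <= i)%nat ->
  Nat.iter j (lift_map ze) (fun k => ze * INR n ^ k) i = ze * INR (n + j) ^ i.
Proof.
  induction j; intros i Hi; simpl Nat.iter; [now rewrite Nat.add_0_r |].
  rewrite (lift_map_monomials ze (INR (n + j))), <- S_INR; auto.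
  now replace (S (n + j)) with (n + S j)%nat by lia.
Qed.

Lemma sum_binomial_le i : (1 <= i)%nat -> sum_f_R0 (fun x => C i (S x)) (i - 1) <= 2 ^ i.
Proof.
  intros Hi. replace 2 with (1 + 1) by ring. rewrite binomial, (decomp_sum _ i) by lia.
  replace (Init.Nat.pred i) with (i - 1)%nat by lia. rewrite C_n0, !pow1.
  rewrite (sum_eq (fun k => C i (S k) * 1 ^ S k * 1 ^ (i - S k)) (fun x => C i (S x))).
  - lra.
  - intros. rewrite !pow1. ring.
Qed.

Lemma sum_f_R0_diff_bound N u v w s : (forall x, (x <= N)%nat -> 0 <= u x - v x <= s * w x) ->
  0 <= sum_f_R0 u N - sum_f_R0 v N <= s * sum_f_R0 w N.
Proof.
  induction N; intros Hb; simpl; [apply Hb; lia |].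
  assert (0 <= sum_f_R0 u N - sum_f_R0 v N <= s * sum_f_R0 w N) by (apply IHN; intros; apply Hb; lia).
  pose proof (Hb (S N) (le_n _)). lra.
Qed.

Lemma lift_map_expansion ze Y Z s d : (forall k, (1 <= k <= d)%nat -> 0 <= Y k - Z k <= s) ->
  forall i, (1 <= i <= d)%nat -> 0 <= lift_map ze Y i - lift_map ze Z i <= 2 ^ d * s.
Proof.
  intros H i Hi. unfold lift_map. rewrite !sum_f_1 by lia.
  destruct (sum_f_R0_diff_bound (i - 1) (fun x => C i (S x) * Y (S x))
              (fun x => C i (S x) * Z (S x)) (fun x => C i (S x)) s) as [B1 B2].
  { intros x Hx. pose proof (C_nonneg i (S x) ltac:(lia)). pose proof (H (S x) ltac:(lia)). nra. }
  pose proof (sum_binomial_le i ltac:(lia)).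
  assert (2 ^ i <= 2 ^ d) by (apply Rle_pow; lra || lia).
  assert (0 <= s) by (destruct (H d) as [? ?]; lia || lra).
  split; [lra | nra].
Qed.

Lemma iter_lift_map_expansion ze Y Z s d :
  (forall k, (1 <= k <= d)%nat -> 0 <= Y k - Z k <= s) ->
  forall j i, (1 <= i <= d)%nat ->
  0 <= Nat.iter j (lift_map ze) Y i - Nat.iter j (lift_map ze) Z i <= (2 ^ d) ^ j * s.
Proof.
  intros H j. induction j; intros i Hi; simpl Nat.iter; [rewrite Rmult_1_l; auto |].
  replace ((2 ^ d) ^ S j * s) with (2 ^ d * ((2 ^ d) ^ j * s)) by (simpl; ring).
  now apply lift_map_expansion.
Qed.

(** * Factors of the digit word *)

Lemma word_w_iff_frac b d a n t : (2 <= b)%nat -> 0 < a -> (1 <= t <= b - 1)%nat ->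
  word_w b d a n t <->
  logb b (INR t) <= frac (logb b a * INR n ^ d) < logb b (INR (t + 1)).
Proof.
  intros Hb Ha Ht. unfold word_w. rewrite is_msd_iff_frac by (auto; now apply pow_lt).
  replace (logb b (a ^ (n ^ d))) with (logb b a * INR n ^ d); [reflexivity |].
  unfold logb. rewrite ln_pow, pow_INR by auto. field. pose proof (ln_base_pos b Hb). lra.
Qed.

Lemma exists_pos_lower_bound L (f : nat -> R) : (forall i, (i < L)%nat -> 0 < f i) ->
  exists mg, 0 < mg /\ forall i, (i < L)%nat -> mg <= f i.
Proof.
  induction L; intros H; [exists 1; split; [lra | intros; lia] |].
  destruct IHL as [m1 [H1 H2]]; [intros; apply H; lia |].
  exists (Rmin m1 (f L)). split; [apply Rmin_glb_lt; auto; apply H; lia |].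
  intros i Hi. destruct (Nat.eq_dec i L) as [-> | Hne]; [apply Rmin_r |].
  eapply Rle_trans; [apply Rmin_l | apply H2; lia].
Qed.

Section Factors.

Variables (d b : nat) (a : R) (u : list nat).
Hypotheses (hd : (1 <= d)%nat) (hb : (2 <= b)%nat) (ha : 0 < a).
Hypothesis hu : forall t, In t u -> (1 <= t <= b - 1)%nat.

Let ze := logb b a.

Lemma in_range_d : in_range d d = true.
Proof. unfold in_range. apply andb_true_intro. split; apply Nat.leb_le; lia. Qed.

Lemma in_torus_proj y : in_torus d (proj_torus d y).
Proof.
  intros i Hi. unfold proj_torus.
  replace (in_range d i) with true by (symmetry; unfold in_range;
    apply andb_true_intro; split; apply Nat.leb_le; lia).
  apply frac_unit_interval.
Qed.

Lemma iter_in_U_t_iff y j t :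
  U_t b d t (Nat.iter j (fmap d ze) (proj_torus d y)) <->
  logb b (INR t) <= frac (Nat.iter j (lift_map ze) y d) < logb b (INR (t + 1)).
Proof.
  rewrite iter_fmap_proj_torus. unfold U_t.
  replace (proj_torus d _ d) with (frac (Nat.iter j (lift_map ze) y d))
    by (unfold proj_torus; now rewrite in_range_d).
  split; [tauto | split; auto using in_torus_proj].
Qed.

Lemma nth_u_is_digit i : (i < length u)%nat -> (1 <= nth i u 0%nat <= b - 1)%nat.
Proof. intros. apply hu, nth_In; auto. Qed.

(** The ball sits just above the orbit point [(ze k ^ i)_i]: the digit windows are
    closed on the left, and [F^j] moves points by at most [2 ^ (d j)] times as much. *)
Lemma factor_has_interior : is_factor b d a u -> nonempty_interior d (U_word b d ze u).
Proof.
  intros [k [Hk Hw]]. set (L := length u).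
  set (lo := fun i => logb b (INR (nth i u 0%nat))).
  set (hi := fun i => logb b (INR (nth i u 0%nat + 1))).
  set (fr := fun i => frac (ze * INR (k + i) ^ d)).
  assert (Hfr : forall i, (i < L)%nat -> lo i <= fr i < hi i)
    by (intros i Hi; now apply word_w_iff_frac, Hw; auto; apply nth_u_is_digit).
  destruct (exists_pos_lower_bound L (fun i => hi i - fr i)) as [mg [Hmg Hmg2]].
  { intros i Hi. specialize (Hfr i Hi). lra. }
  set (K := 2 ^ d). assert (HK : 1 <= K) by (apply pow_R1_Rle; lra).
  assert (HKL : 0 < K ^ L) by (apply pow_lt; lra).
  set (eps := mg / (4 * K ^ L)). assert (Heps : 0 < eps) by (apply Rdiv_lt_0_compat; lra).
  exists (fun i => ze * INR k ^ i + eps), eps. split; auto.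
  intros y Hy. split; [apply in_torus_proj |]. intros j Hj. apply iter_in_U_t_iff.
  destruct (iter_lift_map_expansion ze y (fun i => ze * INR k ^ i) (2 * eps) d) with (j := j) (i := d)
    as [G1 G2]; [| lia |].
  { intros i Hi. specialize (Hy i Hi). apply Rabs_lt_between in Hy. lra. }
  rewrite iter_lift_map_orbit in G1, G2 by lia.
  set (dl := Nat.iter j (lift_map ze) y d - ze * INR (k + j) ^ d) in *.
  assert (Hdl : dl <= mg / 2).
  { assert (K ^ j <= K ^ L) by (apply Rle_pow; auto; lia).
    apply Rle_trans with (K ^ L * (2 * eps)); [fold K in G2; nra |].
    unfold eps. right. field. lra. }
  replace (Nat.iter j (lift_map ze) y d) with (ze * INR (k + j) ^ d + dl) by (unfold dl; ring).
  specialize (Hfr j Hj). specialize (Hmg2 j Hj). cbv beta in Hmg2. unfold fr, lo, hi in *.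
  destruct (logb_digit_window b _ hb (nth_u_is_digit j Hj)).
  rewrite frac_add_small by lra. lra.
Qed.

Lemma interior_gives_factor : irrational ze ->
  nonempty_interior d (U_word b d ze u) -> is_factor b d a u.
Proof.
  intros Hi [c [eps [Heps HS]]].
  destruct (orbit_dense_mod1 d ze Hi c eps Heps) as [n [Hn Hm]].
  destruct (functional_choice (fun i m => (1 <= i <= d)%nat -> Rabs (ze * INR n ^ i - IZR m - c i) < eps))
    as [m Hm'].
  { intros i. destruct (le_lt_dec 1 i); [destruct (le_lt_dec i d) |].
    - destruct (Hm i ltac:(lia)) as [m Hmi]. now exists m.
    - exists 0%Z. lia.
    - exists 0%Z. lia. }
  assert (Horbit : proj_torus d (fun i => ze * INR n ^ i - IZR (m i))
                   = proj_torus d (fun i => ze * INR n ^ i)).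
  { apply functional_extensionality. intros i. unfold proj_torus. destruct (in_range d i); auto.
    rewrite <- (frac_add_int _ (m i)). f_equal. ring. }
  destruct (HS _ Hm') as [_ Hu]. rewrite Horbit in Hu.
  exists n. split; auto. intros j Hj. specialize (Hu j Hj).
  apply iter_in_U_t_iff in Hu. rewrite iter_lift_map_orbit in Hu by lia.
  now apply word_w_iff_frac; auto; apply nth_u_is_digit.
Qed.

End Factors.

Theorem mainTheorem3 (d b : nat) (a : R)
  (hd : (1 <= d)%nat) (hb : (5 <= b)%nat) (ha : 0 < a)
  (hirr : ~ exists (p q : Z), q <> 0%Z /\ logb b a = IZR p / IZR q)
  (u : list nat) (hu : forall t, In t u -> (1 <= t <= b - 1)%nat) :
  is_factor b d a u <-> nonempty_interior d (U_word b d (logb b a) u).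
Proof.
  split.
  - apply factor_has_interior; auto. lia.
  - apply interior_gives_factor; auto. lia.
Qed.
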